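(* Let $0<\alpha<1$ and let a collection of $m$ p-values be partitioned into $n\ge1$ disjoint chunks $\mathcal C_1,\dots,\mathcal C_n$ of sizes $m_{\mathcal C_1},\dots,m_{\mathcal C_n}$, $\sum_i m_{\mathcal C_i}=m$. Then the set of p-values marked significant by the FastLSU multi-chunk algorithm (defined in the context) at level $\alpha$ is exactly the set of p-values rejected by the Benjamini–Hochberg LSU procedure at level $\alpha$ applied to the single batch $\mathcal C=\bigcup_{i=1}^n\mathcal C_i$ of all $m$ p-values.
   Context: The LSU procedure at level $\alpha$ on $m$ p-values: with $p_{(1)}\le\cdots\le p_{(m)}$ the sorted p-values, let $r=\max\{i:\ p_{(i)}<i\alpha/m\}$ ($r=0$ if none) and reject all p-values $<r\alpha/m$. The FastLSU multi-chunk algorithm: Step 1: in each chunk $\mathcal C_i$ count the p-values $<\alpha$, call this count $r^{(1)}_{i}$. Step $k+1$ ($k\ge1$): in each chunk $\mathcal C_i$ count the p-values $<\big(\sum_{j=1}^n r^{(k)}_{j}\big)\alpha/m$, call this count $r^{(k+1)}_{i}$. Repeat until $\sum_j r^{(k+1)}_j=\sum_j r^{(k)}_j$ (or $k+1=m$), and mark as significant the p-values counted in the final step, i.e. all p-values $<\big(\sum_j r^{(k)}_j\big)\alpha/m$. Note that all thresholds use the global number $m$ of p-values, not the chunk sizes. *)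

From HB Require Import structures.
From mathcomp Require Import all_boot all_order all_algebra.
Set Implicit Arguments. Unset Strict Implicit. Unset Printing Implicit Defensive.
Import Order.TTheory GRing.Theory Num.Theory.
Local Open Scope ring_scope.

Section FastLSU.
Variables (R : realFieldType) (m n : nat).
Variable alpha : R.
Variable p : 'I_m -> R.
(* chunk j = index of the chunk C_i containing the j-th p-value;
   the chunks {j | chunk j = i}, i < n, form a partition of the m p-values *)
Variable chunk : 'I_m -> 'I_n.

(* threshold  r * alpha / m  (global m, not chunk sizes) *)
Definition thresh (r : nat) : R := r%:R * alpha / m%:R.

Definition chunk_count (i : 'I_n) (t : R) : nat :=
  #|[set j : 'I_m | (chunk j == i) && (p j < t)]|.

Definition total_count (t : R) : nat := (\sum_(i < n) chunk_count i t)%N.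

(* Given the current step index k and the current total
   Rk = sum_j r^(k)_j, compute R(k+1) = sum_j r^(k+1)_j with threshold
   Rk * alpha / m; stop if R(k+1) = Rk or k+1 = m, returning Rk (the total
   whose threshold is used in the final step); otherwise continue.
   [fuel] only bounds the recursion (the algorithm always stops before
   m+1 iterations). *)
Fixpoint fastlsu_loop (fuel k Rk : nat) : nat :=
  match fuel with
  | 0 => Rk
  | fuel'.+1 =>
      let Rk1 := total_count (thresh Rk) in
      if (Rk1 == Rk) || (k.+1 == m) then Rk
      else fastlsu_loop fuel' k.+1 Rk1
  end.

Definition fastlsu_final : nat := fastlsu_loop m.+1 1 (total_count alpha).

Definition fastlsu_significant : {set 'I_m} :=
  [set j : 'I_m | p j < thresh fastlsu_final].

Definition sorted_pvals : seq R := sort <=%R [seq p j | j <- enum 'I_m].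

(* p_(i), the i-th smallest p-value (1-based) *)
Definition pval_ord (i : nat) : R := nth 0 sorted_pvals i.-1.

Definition lsu_ok (i : nat) : bool := (0 < i)%N && (pval_ord i < thresh i).

Definition lsu_r : nat := (\max_(i < m.+1 | lsu_ok i) (i : nat))%N.

Definition lsu_rejected : {set 'I_m} := [set j : 'I_m | p j < thresh lsu_r].

End FastLSU.

From HB Require Import structures.
From mathcomp Require Import all_boot all_order all_algebra.
From mathcomp Require Import zify.
Set Implicit Arguments. Unset Strict Implicit. Unset Printing Implicit Defensive.
Import Order.TTheory GRing.Theory Num.Theory.
Local Open Scope ring_scope.

(* Since the chunks partition the p-values, every step of FastLSU only sees
   the global count g(r) = #{j | p_j < r alpha / m}: it iterates g starting
   from g(m) = #{j | p_j < alpha}.  On the other hand p_(i) < i alpha / m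
   holds iff at least i p-values lie below i alpha / m, i.e. iff i <= g(i),
   so the LSU index r is the greatest post-fixpoint of the monotone map g on
   [0, m].  Such a point is a fixpoint, and every s >= r satisfies
   r <= g(s) <= s with equality only at s = r; hence the iterates decrease
   strictly until they reach r.  The step bound k + 1 = m can only interrupt
   the iteration at the value 1 when r = 0, and then g(1) = 0 = g(r). *)

Section GreatestPostFixpoint.
Variables (m : nat) (f : nat -> nat).
Hypotheses (f_homo : {homo f : i j / (i <= j)%N}) (f_le : forall i, (f i <= m)%N).
Variable r : nat.
Hypotheses (r_post : (r <= f r)%N)
  (r_max : forall i, (i <= m)%N -> (i <= f i)%N -> (i <= r)%N).

Lemma max_postfix_fixed : f r = r.
Proof. by apply/eqP; rewrite eqn_leq r_post andbT r_max // f_homo. Qed.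

Lemma max_postfix_le_image s : (r <= s)%N -> (r <= f s)%N.
Proof. by move=> rs; rewrite -{1}max_postfix_fixed f_homo. Qed.

Lemma image_le_above_max_postfix s : (r <= s)%N -> (f s <= s)%N.
Proof.
move=> rs; rewrite leqNgt; apply/negP => s_lt_fs.
have := @r_max (f s) (f_le s) (f_homo (ltnW s_lt_fs)); lia.
Qed.

Lemma fixpoint_above_max_postfix s : (r <= s)%N -> f s = s -> s = r.
Proof.
move=> rs fs; apply/eqP; rewrite eqn_leq rs andbT r_max // ?fs //.
by rewrite -fs f_le.
Qed.

End GreatestPostFixpoint.

Section Counting.
Variables (R : realFieldType) (m n : nat) (p : 'I_m -> R) (chunk : 'I_m -> 'I_n).

Definition count_below (t : R) : nat := #|[set j : 'I_m | p j < t]|.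

Lemma total_countE t : total_count p chunk t = count_below t.
Proof.
rewrite /total_count /count_below cardE -sum1_size big_enum /=.
rewrite (partition_big chunk xpredT) //=; apply: eq_bigr => i _.
rewrite /chunk_count cardE -sum1_size big_enum /=.
by apply: eq_bigl => j; rewrite !inE andbC.
Qed.

Lemma count_below_homo : {homo count_below : s t / s <= t >-> (s <= t)%N}.
Proof.
move=> s t st; apply/subset_leq_card/subsetP => j; rewrite !inE => ?.
exact: lt_le_trans st.
Qed.

Lemma count_below_le t : (count_below t <= m)%N.
Proof. by rewrite -[m in (_ <= m)%N]card_ord max_card. Qed.

Lemma count_below_eq_sets s t : count_below s = count_below t ->
  [set j : 'I_m | p j < s] = [set j : 'I_m | p j < t].
Proof.
wlog st : s t / s <= t => [hwlog|eq_st].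
  by case: (leP s t) => [/hwlog//|/ltW ts /esym/(hwlog _ _ ts)->].
apply/setP/subset_cardP => //; apply/subsetP => j; rewrite !inE => ?.
exact: lt_le_trans st.
Qed.

Lemma count_sorted_pvals t :
  count (fun x => x < t) (sorted_pvals p) = count_below t.
Proof.
rewrite /sorted_pvals (permP (permEl (perm_sort _ _))) count_map.
by rewrite /count_below cardsE cardE /enum_mem filter_predT size_filter.
Qed.

Lemma size_sorted_pvals : size (sorted_pvals p) = m.
Proof. by rewrite size_sort size_map size_enum_ord. Qed.

End Counting.

Section LSU.
Variables (R : realFieldType) (m : nat) (alpha : R) (p : 'I_m -> R).
Hypothesis alpha_ge0 : 0 <= alpha.

Definition lsu_count (r : nat) : nat := count_below p (thresh m alpha r).

Lemma lsu_count_homo : {homo lsu_count : i j / (i <= j)%N}.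
Proof.
move=> i j ij; apply: count_below_homo.
by rewrite /thresh ler_wpM2r ?invr_ge0 ?ler_wpM2r ?ler_nat.
Qed.

Lemma lsu_count_le i : (lsu_count i <= m)%N.
Proof. exact: count_below_le. Qed.

Lemma lsu_okE i : (i <= m)%N -> lsu_ok alpha p i = (0 < i)%N && (i <= lsu_count i)%N.
Proof.
case: i => [|i] // im; rewrite /lsu_ok /pval_ord /lsu_count /=.
have sorted_p : sorted <=%O (sorted_pvals p) by apply: sort_sorted; exact: le_total.
have [lt_i|ge_i] := ltnP i (count_below p (thresh m alpha i.+1)).
  by apply: (nth_count_lt _ sorted_p); rewrite count_sorted_pvals.
apply/negbTE; rewrite -leNgt; apply: (nth_count_ge _ sorted_p).
by rewrite count_sorted_pvals ge_i size_sorted_pvals.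
Qed.

Lemma lsu_r_le : (lsu_r alpha p <= m)%N.
Proof.
apply: (big_ind (fun x => x <= m)%N) => // [x y xm ym|i _].
  by rewrite geq_max xm.
by rewrite -ltnS.
Qed.

Lemma lsu_r_postfix : (lsu_r alpha p <= lsu_count (lsu_r alpha p))%N.
Proof.
apply: (big_ind (fun x => x <= lsu_count x)%N) => // [x y xf yf|i].
  by case: (leqP x y).
by rewrite lsu_okE ?(leq_ord i) // => /andP[].
Qed.

Lemma lsu_r_max i : (i <= m)%N -> (i <= lsu_count i)%N -> (i <= lsu_r alpha p)%N.
Proof.
case: i => [|i] // im ifi; have im' : (i.+1 < m.+1)%N by [].
apply: (leq_bigmax_cond (Ordinal im') (P := fun j : 'I_m.+1 => lsu_ok alpha p j)).
by rewrite lsu_okE.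
Qed.

Lemma lsu_r_fixed : lsu_count (lsu_r alpha p) = lsu_r alpha p.
Proof.
exact: (max_postfix_fixed lsu_count_homo lsu_count_le lsu_r_postfix lsu_r_max).
Qed.

Lemma lsu_r_le_count s : (lsu_r alpha p <= s)%N -> (lsu_r alpha p <= lsu_count s)%N.
Proof.
exact: (max_postfix_le_image lsu_count_homo lsu_count_le lsu_r_postfix lsu_r_max).
Qed.

Lemma lsu_count_le_above s : (lsu_r alpha p <= s)%N -> (lsu_count s <= s)%N.
Proof.
exact: (image_le_above_max_postfix lsu_count_homo lsu_count_le lsu_r_postfix lsu_r_max).
Qed.

Lemma lsu_count_fixpoint s :
  (lsu_r alpha p <= s)%N -> lsu_count s = s -> s = lsu_r alpha p.
Proof. exact: (fixpoint_above_max_postfix lsu_count_le lsu_r_max). Qed.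

(* Until r is reached, Rk drops by at least one per step; the bound Rk + k <= m
   keeps the loop within its fuel and confines the cutoff k + 1 = m to Rk <= 1. *)
Lemma fastlsu_loop_count n (chunk : 'I_m -> 'I_n) fuel k Rk :
  (lsu_r alpha p <= Rk <= m)%N ->
  Rk = lsu_r alpha p \/ (Rk + k <= m)%N /\ (Rk < fuel)%N ->
  lsu_count (fastlsu_loop alpha p chunk fuel k Rk) = lsu_r alpha p.
Proof.
elim: fuel k Rk => [|fuel IH] k Rk /andP[rR Rm] inv /=.
  by case: inv => [->|[]//]; exact: lsu_r_fixed.
rewrite total_countE -/(lsu_count Rk).
have [fixR|nfixR] := eqVneq (lsu_count Rk) Rk.
  by rewrite /= fixR (lsu_count_fixpoint rR fixR).
have lt_R : (lsu_count Rk < Rk)%N by rewrite ltn_neqAle nfixR lsu_count_le_above.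
have inv' : (Rk + k <= m)%N /\ (Rk < fuel.+1)%N.
  by case: inv => // eqR; move: nfixR; rewrite eqR lsu_r_fixed eqxx.
rewrite /=; case: eqP (lsu_r_le_count rR) => [km|_] r_le.
  by have := lsu_count_le Rk; lia.
apply: IH; first by rewrite r_le lsu_count_le.
right; lia.
Qed.

End LSU.

Theorem theorem3 (R : realFieldType) (m n : nat) (alpha : R)
  (p : 'I_m -> R) (chunk : 'I_m -> 'I_n) :
  0 < alpha < 1 -> (0 < n)%N -> (forall j, 0 <= p j <= 1) ->
  fastlsu_significant alpha p chunk = lsu_rejected alpha p.
Proof.
move=> /andP[/ltW alpha_ge0 _] _ _.
have [m0|m_gt0] := posnP m; first by subst m; apply/setP => -[].
rewrite /fastlsu_significant /lsu_rejected; apply: count_below_eq_sets.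
rewrite -[RHS]/(lsu_count alpha p (lsu_r alpha p)) (lsu_r_fixed p alpha_ge0).
have count_alpha : total_count p chunk alpha = lsu_count alpha p m.
  by rewrite total_countE /lsu_count /thresh mulrAC divff ?mul1r ?pnatr_eq0 -?lt0n.
rewrite /fastlsu_final count_alpha; apply: fastlsu_loop_count => //.
  by rewrite lsu_r_le_count ?lsu_r_le ?lsu_count_le.
have [fix_m|nfix_m] := eqVneq (lsu_count alpha p m) m.
  by left; rewrite [LHS]fix_m; exact: lsu_count_fixpoint (lsu_r_le alpha p) fix_m.
right; have := lsu_count_le_above (p:=p) alpha_ge0 (lsu_r_le alpha p).
by rewrite leq_eqVlt (negbTE nfix_m) /=; lia.
Qed.
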